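(* Let $f:\mathbb{R}^d\to\mathbb{R}$ be continuously differentiable, and let $\tilde F_{\ell_1}$ be as defined in the context. Then for every $x\in\mathbb{R}^d$, \[ \mathcal F[\tilde F_{\ell_1}](x)\ \subseteq\ \overline{\operatorname{conv}}\Bigl\{-\,s\,e^{(i)}:\ i\in\mathcal I(x),\ s\in\operatorname{Sign}(\partial_i f(x))\Bigr\}. \]
   Context: $e^{(i)}$ is the $i$-th standard basis vector of $\mathbb{R}^d$; $\operatorname{sign}(u)\in\{-1,0,1\}$ with $\operatorname{sign}(0)=0$; $\operatorname{Sign}(u)=\{1\}$ if $u>0$, $[-1,1]$ if $u=0$, $\{-1\}$ if $u<0$. $\mathcal I(x):=\{i:\ |\partial_i f(x)|=\max_{1\le j\le d}|\partial_j f(x)|\}$. $\tilde F_{\ell_1}:\mathbb{R}^d\to\mathbb{R}^d$ is any function with $\tilde F_{\ell_1}(y)\in\{-\operatorname{sign}(\partial_i f(y))\,e^{(i)}:\ i\in\mathcal I(y)\}$ for all $y$. For $F:\mathbb{R}^d\to\mathbb{R}^d$, the Filippov set is $\mathcal F[F](x):=\bigcap_{\delta>0}\overline{\operatorname{conv}}\{F(y):\ \|y-x\|<\delta\}$. *)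

From HB Require Import structures.
From mathcomp Require Import all_boot all_order all_algebra.
From mathcomp Require Import all_classical all_reals all_analysis.
Set Implicit Arguments. Unset Strict Implicit. Unset Printing Implicit Defensive.
Import Order.TTheory GRing.Theory Num.Theory.
Import numFieldNormedType.Exports.
Local Open Scope classical_set_scope.
Local Open Scope ring_scope.

(* R^d is modelled as row vectors 'rV[R]_d. *)

Definition ebasis (R : realType) (d : nat) (i : 'I_d) : 'rV[R]_d := delta_mx 0 i.

Definition pderiv (R : realType) (d : nat) (f : 'rV[R]_d -> R) (i : 'I_d)
  (x : 'rV[R]_d) : R := 'D_(ebasis R i) f x.

Definition C1 (R : realType) (d : nat) (f : 'rV[R]_d -> R) : Prop :=
  (forall x, differentiable f x) /\
  (forall i : 'I_d, continuous (fun x => pderiv f i x)).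

Definition maxidx (R : realType) (d : nat) (f : 'rV[R]_d -> R) (x : 'rV[R]_d)
  : set 'I_d :=
  [set i | `|pderiv f i x| = \big[Num.max/0]_(j < d) `|pderiv f j x| ].

Definition Sgn (R : realType) (u : R) : set R :=
  [set s | (0 < u -> s = 1) /\ (u = 0 -> -1 <= s <= 1) /\ (u < 0 -> s = -1)].

Definition conv_hull (R : realType) (d : nat) (A : set 'rV[R]_d) : set 'rV[R]_d :=
  [set v | exists (n : nat) (w : 'I_n -> R) (p : 'I_n -> 'rV[R]_d),
     (forall k, 0 <= w k) /\ \sum_(k < n) w k = 1 /\ (forall k, A (p k)) /\
     v = \sum_(k < n) w k *: p k].

Definition cl_conv (R : realType) (d : nat) (A : set 'rV[R]_d) : set 'rV[R]_d :=
  closure (conv_hull A).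

Definition filippov (R : realType) (d : nat) (F : 'rV[R]_d -> 'rV[R]_d)
  (x : 'rV[R]_d) : set 'rV[R]_d :=
  \bigcap_(delta in [set e : R | 0 < e])
     cl_conv [set F y | y in [set y | `|y - x| < delta]].

(* F is a selection of the l1 steepest descent direction *)
Definition is_Ftilde_l1 (R : realType) (d : nat) (f : 'rV[R]_d -> R)
  (F : 'rV[R]_d -> 'rV[R]_d) : Prop :=
  forall y, exists i, maxidx f y i /\
    F y = - ((Num.sg (pderiv f i y)) *: ebasis R i).

From HB Require Import structures.
From mathcomp Require Import all_boot all_order all_algebra.
From mathcomp Require Import all_classical all_reals all_analysis.
Import Order.TTheory GRing.Theory Num.Theory.
Import numFieldNormedType.Exports.
Local Open Scope classical_set_scope.
Local Open Scope ring_scope.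

(* By continuity of the partial derivatives, every y close enough to x has
   two properties: an index that is not maximal at x is not maximal at y,
   and for every index i the sign of d_i f(y) lies in Sign(d_i f(x)).
   Hence near x all values of F_l1 lie in the target set, and the Filippov
   set, being an intersection of closed convex hulls over shrinking balls,
   lies in its closed convex hull. *)

Lemma conv_hullS (R : realType) (d : nat) (A B : set 'rV[R]_d) :
  A `<=` B -> conv_hull A `<=` conv_hull B.
Proof.
move=> AB _ [n [w [p [w_ge0 [w_sum1 [Ap ->]]]]]].
by exists n, w, p; do 3!split=> //; move=> k; exact/AB/Ap.
Qed.

Lemma cl_convS (R : realType) (d : nat) (A B : set 'rV[R]_d) :
  A `<=` B -> cl_conv A `<=` cl_conv B.
Proof. by move=> AB; apply/closureS/conv_hullS. Qed.

Lemma filippov_sub_cl_conv (R : realType) (d : nat)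
    (F : 'rV[R]_d -> 'rV[R]_d) (B : set 'rV[R]_d) (x : 'rV[R]_d) :
  (\forall y \near x, B (F y)) -> filippov F x `<=` cl_conv B.
Proof.
move=> /(nbhs_ballP _ _) [e /= e_gt0 BF] v /(_ e e_gt0).
apply: cl_convS => _ [y xy <-]; apply: BF.
by rewrite -ball_normE /ball_ /= distrC.
Qed.

Section NearContinuity.
Context {R : realType} {T : topologicalType}.

Lemma near_Sgn_sg (g : T -> R) (x : T) : {for x, continuous g} ->
  \forall y \near x, Sgn (g x) (Num.sg (g y)).
Proof.
move=> gx; case: (ltrgt0P (g x)) => [gx_gt0|gx_lt0|gx0].
- apply: filterS (cvgr_gt _ gx _ gx_gt0) => y gy_gt0.
  split=> [_|]; first by rewrite gtr0_sg.
  by split=> [gx0|gx_lt0]; [move: gx_gt0; rewrite gx0 ltxx|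
                            move: (lt_trans gx_gt0 gx_lt0); rewrite ltxx].
- apply: filterS (cvgr_lt _ gx _ gx_lt0) => y gy_lt0.
  split=> [gx_gt0|]; first by move: (lt_trans gx_gt0 gx_lt0); rewrite ltxx.
  split=> [gx0|_]; last by rewrite ltr0_sg.
  by move: gx_lt0; rewrite gx0 ltxx.
- apply: nearW => y; rewrite gx0; split=> [|]; first by rewrite ltxx.
  split=> [_|]; last by rewrite ltxx.
  by rewrite -ler_norml normr_sg; case: (_ != 0); rewrite ?ler01 ?lexx.
Qed.

Lemma near_lt_bigmax_norm (n : nat) (g : 'I_n -> T -> R) (x : T) (j : 'I_n) :
  (forall i, {for x, continuous (g i)}) ->
  `|g j x| < \big[Num.max/0]_(i < n) `|g i x| ->
  \forall y \near x, `|g j y| < \big[Num.max/0]_(i < n) `|g i y|.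
Proof.
move=> gx jx.
have [k _ kx] := Order.TotalTheory.eq_bigmax j predT (fun i => `|g i x|) isT
  (fun i _ => normr_ge0 _).
rewrite kx -subr_gt0 in jx.
have normB : (fun y => `|g k y| - `|g j y|) @ x --> `|g k x| - `|g j x|.
  by apply: cvgB; apply: cvg_norm; exact: gx.
apply: filterS (cvgr_gt _ normB _ jx) => y; rewrite subr_gt0 => jky.
exact: lt_le_trans jky (le_bigmax _ _ k).
Qed.

End NearContinuity.

Lemma near_maxidx (R : realType) (d : nat) (f : 'rV[R]_d -> R)
    (x : 'rV[R]_d) (j : 'I_d) :
  (forall i : 'I_d, continuous (fun x => pderiv f i x)) ->
  \forall y \near x, maxidx f y j -> maxidx f x j.
Proof.
move=> fC1; have [jx|jx] := pselect (maxidx f x j).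
  exact: filterS (fun _ _ _ => jx) filterT.
have jx_lt : `|pderiv f j x| < \big[Num.max/0]_(i < d) `|pderiv f i x|.
  by rewrite lt_neqAle le_bigmax andbT; apply/eqP.
have := near_lt_bigmax_norm _ _ _ _ (fun i => fC1 i x) jx_lt.
apply: filterS => y jy jmax.
by move: jy; rewrite /maxidx /= in jmax; rewrite -jmax ltxx.
Qed.

Theorem lemma4p1 (R : realType) (d : nat) (f : 'rV[R]_d -> R)
  (F : 'rV[R]_d -> 'rV[R]_d) :
  C1 f -> is_Ftilde_l1 f F ->
  forall x : 'rV[R]_d,
    filippov F x `<=`
    cl_conv [set v | exists i s, maxidx f x i /\ Sgn (pderiv f i x) s /\
                                 v = - (s *: ebasis R i)].
Proof.
move=> [_ fC1] FF x; apply: filippov_sub_cl_conv.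
have near_i i : \forall y \near x,
    (maxidx f y i -> maxidx f x i) /\
    Sgn (pderiv f i x) (Num.sg (pderiv f i y)).
  by apply: filterI; [exact: near_maxidx | exact: near_Sgn_sg (fC1 i x)].
have near_all := filter_forall (nbhs_filter x) near_i.
apply: filterS near_all => y near_y.
have [i [iy ->]] := FF y; have [ixy sgn_i] := near_y i.
by exists i, (Num.sg (pderiv f i y)); split; [exact: ixy | split].
Qed.
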